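(* Consider the linear time-invariant descriptor system $$E x_{k+1}=A x_k+B u_k+w_k,\qquad y_{k}=H x_{k}+v_{k-1},$$ with $x_k\in\mathbb{R}^n$, $y_k\in\mathbb{R}^m$, $u_k\in\mathbb{R}^q$, $E,A\in\mathbb{R}^{n_1\times n}$, $B\in\mathbb{R}^{n_1\times q}$, $H\in\mathbb{R}^{m\times n}$. Assume $\begin{bmatrix}E & A\end{bmatrix}$ has full row rank, $\begin{bmatrix}E^T & H^T\end{bmatrix}^T$ has full column rank, and that $P_0,Q,R$ are symmetric positive definite. Let $\bar x_0\in\mathbb{R}^n$, let inputs $u_0,u_1,\dots$ and measurements $y_1,y_2,\dots$ be given, and let $T\ge 2$. Define the unconstrained objective $$J_T(x_1,\dots,x_T)=\|Ex_1-A\bar x_0-Bu_0\|^2_{P_0^{(-)}}+\sum_{k=1}^{T-1}\|Ex_{k+1}-Ax_k-Bu_k\|_Q^2+\sum_{k=1}^{T-1}\|y_k-Hx_k\|_R^2,$$ where $P_0^{(-)}=AP_0A^T+Q$. Define recursively, starting from $\hat x_0^{(+)}=\bar x_0$, $P_0^{(+)}=P_0$, for $k=1,\dots,T-1$: $$P_k^{(+)}=\big(E^T(P_{k-1}^{(-)})^{-1}E+H^TR^{-1}H\big)^{-1},\qquad P_k^{(-)}=AP_k^{(+)}A^T+Q,$$ $$\hat x_k^{(+)}=P_k^{(+)}H^TR^{-1}y_k+P_k^{(+)}E^T(P_{k-1}^{(-)})^{-1}\big(A\hat x_{k-1}^{(+)}+Bu_{k-1}\big).$$ Then for every $x_T\in\mathbb{R}^n$,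 $$\min_{x_1,\dots,x_{T-1}} J_T(x_1,\dots,x_T)=\|Ex_T-z_T\|^2_{P_{T-1}^{(-)}}+\widehat J_{T-1},$$ where $z_T:=A\hat x_{T-1}^{(+)}+Bu_{T-1}$ and $\widehat J_{T-1}$ is a constant independent of $x_T$, namely the minimum over $x_1,\dots,x_{T-1}$ of $\|Ex_1-A\bar x_0-Bu_0\|^2_{P_0^{(-)}}+\sum_{k=1}^{T-2}\|Ex_{k+1}-Ax_k-Bu_k\|_Q^2+\sum_{k=1}^{T-1}\|y_k-Hx_k\|_R^2$.
   Context: For a symmetric positive definite matrix $S$ and a vector $z$, the notation $\|z\|_S^2$ means $z^TS^{-1}z$. All matrices $P_k^{(+)}$, $P_k^{(-)}$ defined by the recursion are symmetric positive definite under the stated assumptions, so all inverses exist. The left-hand side is the arrival cost of the unconstrained full information estimation problem (no inequality constraints on states or noises). *)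

From HB Require Import structures.
From mathcomp Require Import all_boot all_order all_algebra.
Set Implicit Arguments. Unset Strict Implicit. Unset Printing Implicit Defensive.
Import Order.TTheory GRing.Theory Num.Theory.
Local Open Scope ring_scope.

Section Defs.
Variable R : realFieldType.

Definition wnorm2 (p : nat) (S : 'M[R]_p) (z : 'cV[R]_p) : R :=
  (z^T *m invmx S *m z) 0 0.

Definition spd (p : nat) (S : 'M[R]_p) : Prop :=
  S^T = S /\ forall z : 'cV[R]_p, z != 0 -> 0 < (z^T *m S *m z) 0 0.

Definition is_min_of (X : Type) (P : X -> Prop) (f : X -> R) (v : R) : Prop :=
  (exists x, P x /\ f x = v) /\ (forall x, P x -> v <= f x).

Variables (n n1 m q : nat).
Variables (E A : 'M[R]_(n1, n)) (B : 'M[R]_(n1, q)) (H : 'M[R]_(m, n)).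
Variables (P0 : 'M[R]_n) (Q : 'M[R]_n1) (Rm : 'M[R]_m).
Variables (xbar0 : 'cV[R]_n) (u : nat -> 'cV[R]_q) (y : nat -> 'cV[R]_m).

Fixpoint kf_state (k : nat) : 'M[R]_n * 'cV[R]_n :=
  match k with
  | 0 => (P0, xbar0)
  | k'.+1 =>
      let Pp := (kf_state k').1 in
      let xh := (kf_state k').2 in
      let Pm := A *m Pp *m A^T + Q in
      let Pn := invmx (E^T *m invmx Pm *m E + H^T *m invmx Rm *m H) in
      (Pn, Pn *m H^T *m invmx Rm *m y k'.+1
           + Pn *m E^T *m invmx Pm *m (A *m xh + B *m u k'))
  end.

Definition Pplus (k : nat) : 'M[R]_n := (kf_state k).1.
Definition xhat (k : nat) : 'cV[R]_n := (kf_state k).2.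
Definition Pminus (k : nat) : 'M[R]_n1 := A *m Pplus k *m A^T + Q.

(* J_T(x_1,...,x_T); only x 1, ..., x T are used *)
Definition J_T (T : nat) (x : nat -> 'cV[R]_n) : R :=
  wnorm2 (Pminus 0) (E *m x 1%N - A *m xbar0 - B *m u 0%N)
  + \sum_(1 <= k < T) wnorm2 Q (E *m x k.+1 - A *m x k - B *m u k)
  + \sum_(1 <= k < T) wnorm2 Rm (y k - H *m x k).

(* the objective defining Jhat_{T-1}; only x 1, ..., x (T-1) are used *)
Definition Jhat_obj (T : nat) (x : nat -> 'cV[R]_n) : R :=
  wnorm2 (Pminus 0) (E *m x 1%N - A *m xbar0 - B *m u 0%N)
  + \sum_(1 <= k < T.-1) wnorm2 Q (E *m x k.+1 - A *m x k - B *m u k)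
  + \sum_(1 <= k < T) wnorm2 Rm (y k - H *m x k).

End Defs.

From HB Require Import structures.
From mathcomp Require Import all_boot all_order all_algebra.
From mathcomp Require Import lra.

Set Implicit Arguments. Unset Strict Implicit. Unset Printing Implicit Defensive.
Import Order.TTheory GRing.Theory Num.Theory.
Local Open Scope ring_scope.

(* Forward dynamic programming.  Call V an arrival cost of an objective f at
   time k if, for every v, V v is the minimum of f over the trajectories with
   x_k = v.  If the prior objective J_k has arrival cost
   ||E v - z_{k-1}||^2_{P_{k-1}^(-)} + c, adding the measurement term of y_k
   and completing the square (information-form fusion) gives the posterior
   arrival cost ||v - xhat_k^(+)||^2_{P_k^(+)} + c'; adding the dynamics term
   for x_{k+1} and minimising out x_k gives back a prior arrival cost at time
   k+1, because min_v ||v - xhat||^2_P + ||r - A v||^2_Q = ||r - A xhat||^2_{APA^T+Q}.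
   Induction from k = 1 yields the theorem, with Jhat_{T-1} the minimum of the
   posterior arrival cost, attained at xhat_{T-1}^(+). *)

Section ArrivalCost.
Variables (R : realFieldType) (X : Type).
Implicit Types (f : (nat -> X) -> R) (V : X -> R).

Definition arrival_cost f k V :=
  forall v, is_min_of (fun x => x k = v) f (V v).

Definition depends_upto f k :=
  forall x x', (forall i, (i <= k)%N -> x' i = x i) -> f x' = f x.

Lemma is_min_of_addr (P : X -> Prop) (f g : X -> R) v c w :
  is_min_of P f v -> (forall x, g x = f x + c) -> w = v + c -> is_min_of P g w.
Proof.
move=> [[x0 [Px0 fx0]] fmin] gE ->; split; first by exists x0; rewrite gE fx0.
by move=> x Px; rewrite gE lerD2r fmin.
Qed.

Lemma arrival_cost_add f f' k V (h V' : X -> R) :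
  arrival_cost f k V -> (forall x, f' x = f x + h (x k)) ->
  (forall v, V v + h v = V' v) -> arrival_cost f' k V'.
Proof.
move=> hf f'E hV v; have [[x [xk fx]] fmin] := hf v; split.
  by exists x; rewrite f'E xk fx hV.
by move=> x' x'k; rewrite f'E -hV x'k lerD2r fmin.
Qed.

Lemma arrival_cost_marginal f f' k V (W : X -> X -> R) V' :
  depends_upto f k -> arrival_cost f k V ->
  (forall x, f' x = f x + W (x k.+1) (x k)) ->
  (forall w, is_min_of (fun _ => True) (fun v => V v + W w v) (V' w)) ->
  arrival_cost f' k.+1 V'.
Proof.
move=> floc hf f'E hW w; have [[v [_ vopt]] Wmin] := hW w; split.
  have [[x [xk fx]] _] := hf v.
  pose x' i := if i == k.+1 then w else x i.
  have x'k : x' k = x k by rewrite /x' (ltn_eqF (ltnSn k)).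
  exists x'; split; first by rewrite /x' eqxx.
  rewrite f'E (floc x x') => [|i ik]; last by rewrite /x' ltn_eqF.
  by rewrite x'k xk fx {1}/x' eqxx; exact: vopt.
move=> x xk; rewrite f'E xk; apply: le_trans (Wmin (x k) I) _.
by have [_ fmin] := hf (x k); rewrite lerD2r fmin.
Qed.

Lemma arrival_cost_min f k V v0 c :
  arrival_cost f k V -> V v0 = c -> (forall v, c <= V v) ->
  is_min_of (fun _ => True) f c.
Proof.
move=> hf <- hmin; have [[x0 [_ fx0]] _] := hf v0; split; first by exists x0.
move=> x _; apply: le_trans (hmin (x k)) _.
by have [_ fmin] := hf (x k); exact: fmin.
Qed.

End ArrivalCost.

Section QuadraticForms.
Variable R : realFieldType.

Definition bform p (W : 'M[R]_p) (a b : 'cV[R]_p) : R := (a^T *m W *m b) 0 0.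

Lemma wnorm2E p (S : 'M[R]_p) z : wnorm2 S z = bform (invmx S) z z.
Proof. by []. Qed.

Lemma bformC p (W : 'M[R]_p) a b : W^T = W -> bform W a b = bform W b a.
Proof.
move=> sW; have trE (M : 'M[R]_1) : M 0 0 = M^T 0 0 by rewrite mxE.
by rewrite /bform trE !trmx_mul trmxK sW mulmxA.
Qed.

Lemma bformDl p (W : 'M[R]_p) a b c : bform W (a + b) c = bform W a c + bform W b c.
Proof. by rewrite /bform linearD /= !mulmxDl mxE. Qed.

Lemma bformDr p (W : 'M[R]_p) a b c : bform W c (a + b) = bform W c a + bform W c b.
Proof. by rewrite /bform !mulmxDr mxE. Qed.

Lemma bformNN p (W : 'M[R]_p) a : bform W (- a) (- a) = bform W a a.
Proof. by rewrite /bform mulmxN linearN /= !mulNmx opprK. Qed.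

Lemma bform0r p (W : 'M[R]_p) a : bform W a 0 = 0.
Proof. by rewrite /bform mulmx0 mxE. Qed.

Lemma bformDW p (W1 W2 : 'M[R]_p) a b :
  bform (W1 + W2) a b = bform W1 a b + bform W2 a b.
Proof. by rewrite /bform mulmxDr mulmxDl mxE. Qed.

Lemma bform_congr p k (W : 'M[R]_k) (M : 'M[R]_(k, p)) a b :
  bform (M^T *m W *m M) a b = bform W (M *m a) (M *m b).
Proof. by rewrite /bform trmx_mul !mulmxA. Qed.

Lemma bform_mulV p (S : 'M[R]_p) a b : S^T = S -> S \in unitmx ->
  bform (invmx S) (S *m a) (S *m b) = bform S a b.
Proof.
move=> sS uS; rewrite /bform trmx_mul sS.
by rewrite -!mulmxA (mulmxA (invmx S)) mulVmx // mul1mx.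
Qed.

Lemma bform_sqrD p (W : 'M[R]_p) a b : W^T = W ->
  bform W (a + b) (a + b) = bform W a a + 2 * bform W b a + bform W b b.
Proof. by move=> sW; rewrite bformDl !bformDr (bformC a b sW); lra. Qed.

Lemma spd_ge0 p (S : 'M[R]_p) v : spd S -> 0 <= bform S v v.
Proof.
move=> [_ pS]; have [->|v0] := eqVneq v 0; first by rewrite bform0r.
exact: ltW (pS _ v0).
Qed.

Lemma spd_unit p (S : 'M[R]_p) : spd S -> S \in unitmx.
Proof.
move=> [_ pS]; rewrite -row_free_unit; apply: inj_row_free => v vS0.
apply/eqP; apply: contraT => v0.
have := pS v^T; rewrite trmx_eq0 => /(_ v0).
by rewrite trmxK vS0 mul0mx mxE ltxx.
Qed.

Lemma spd_inv p (S : 'M[R]_p) : spd S -> spd (invmx S).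
Proof.
move=> hS; have uS := spd_unit hS; case: hS => sS pS; split.
  by rewrite trmx_inv sS.
move=> z z0; change (0 < bform (invmx S) z z).
have zE : z = S *m (invmx S *m z) by rewrite mulmxA mulmxV ?mul1mx.
rewrite zE (bform_mulV _ _ sS uS); apply: pS.
by apply: contraNneq z0 => w0; rewrite zE w0 mulmx0.
Qed.

Lemma spd_congrD p k (P : 'M[R]_p) (Q : 'M[R]_k) (A : 'M[R]_(k, p)) :
  spd P -> spd Q -> spd (A *m P *m A^T + Q).
Proof.
move=> hP [sQ pQ]; split.
  by rewrite linearD /= !trmx_mul trmxK hP.1 sQ mulmxA.
move=> z z0; change (0 < bform (A *m P *m A^T + Q) z z).
rewrite bformDW -{1}[A]trmxK bform_congr.
have : 0 < bform Q z z := pQ z z0; have := spd_ge0 (A^T *m z) hP; lra.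
Qed.

Lemma spd_info p a b (M1 : 'M[R]_(a, p)) (S1 : 'M[R]_a) (M2 : 'M[R]_(b, p))
    (S2 : 'M[R]_b) :
  spd S1 -> spd S2 -> \rank (col_mx M1 M2) = p ->
  spd (M1^T *m invmx S1 *m M1 + M2^T *m invmx S2 *m M2).
Proof.
move=> /spd_inv hS1 /spd_inv hS2 rkM; split.
  by rewrite linearD /= !trmx_mul !trmxK hS1.1 hS2.1 !mulmxA.
move=> z z0.
change (0 < bform (M1^T *m invmx S1 *m M1 + M2^T *m invmx S2 *m M2) z z).
rewrite bformDW !bform_congr.
have g1 := spd_ge0 (M1 *m z) hS1; have g2 := spd_ge0 (M2 *m z) hS2.
have [M1z0|/hS1.2] := eqVneq (M1 *m z) 0; last by rewrite -/(bform _ _ _); lra.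
have [M2z0|/hS2.2] := eqVneq (M2 *m z) 0; last by rewrite -/(bform _ _ _); lra.
have /row_full_inj Minj : row_full (col_mx M1 M2) by rewrite /row_full rkM.
have : col_mx M1 M2 *m z = col_mx M1 M2 *m 0.
  by rewrite mul_col_mx M1z0 M2z0 col_mx0 mulmx0.
by move/Minj; move/eqP: z0.
Qed.

Definition lsq2 p a b (M1 : 'M[R]_(a, p)) W1 c1 (M2 : 'M[R]_(b, p)) W2 c2 x :=
  bform W1 (M1 *m x - c1) (M1 *m x - c1) + bform W2 (M2 *m x - c2) (M2 *m x - c2).

Lemma lsq2_critical p a b (M1 : 'M[R]_(a, p)) W1 c1 (M2 : 'M[R]_(b, p)) W2 c2 x0 d :
  W1^T = W1 -> W2^T = W2 ->
  M1^T *m W1 *m (M1 *m x0 - c1) + M2^T *m W2 *m (M2 *m x0 - c2) = 0 ->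
  lsq2 M1 W1 c1 M2 W2 c2 (x0 + d)
  = lsq2 M1 W1 c1 M2 W2 c2 x0 + bform (M1^T *m W1 *m M1 + M2^T *m W2 *m M2) d d.
Proof.
move=> sW1 sW2 grad0.
have shift k (M : 'M[R]_(k, p)) c : M *m (x0 + d) - c = (M *m x0 - c) + M *m d.
  by rewrite mulmxDr addrAC.
have cross : bform W1 (M1 *m d) (M1 *m x0 - c1) + bform W2 (M2 *m d) (M2 *m x0 - c2) = 0.
  transitivity ((d^T *m (M1^T *m W1 *m (M1 *m x0 - c1)
                         + M2^T *m W2 *m (M2 *m x0 - c2))) 0 0).
    by rewrite mulmxDr mxE /bform !trmx_mul !mulmxA.
  by rewrite grad0 mulmx0 mxE.
rewrite /lsq2 !shift !bform_sqrD // bformDW !bform_congr; lra.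
Qed.

Lemma wnorm2_marginal p k (P : 'M[R]_p) (Q : 'M[R]_k) (A : 'M[R]_(k, p)) xh r :
  spd P -> spd Q ->
  is_min_of (fun _ => True) (fun v => wnorm2 P (v - xh) + wnorm2 Q (r - A *m v))
    (wnorm2 (A *m P *m A^T + Q) (r - A *m xh)).
Proof.
move=> hP hQ; set G := A *m P *m A^T + Q.
have hG : spd G by exact: spd_congrD.
have uG := spd_unit hG; have uP := spd_unit hP; have uQ := spd_unit hQ.
pose g := invmx G *m (r - A *m xh).
have Gg : G *m g = r - A *m xh by rewrite mulmxA mulmxV // mul1mx.
clearbody g.
pose vs := xh + P *m A^T *m g.
have res1 : 1%:M *m vs - xh = P *m (A^T *m g).
  by rewrite mul1mx /vs (addrC xh) addrK mulmxA.
have res2 : A *m vs - r = - (Q *m g).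
  have rE : r = A *m xh + A *m P *m A^T *m g + Q *m g.
    by rewrite -addrA -mulmxDl -/G Gg addrC subrK.
  by rewrite /vs rE mulmxDr !mulmxA opprD addrA subrr add0r.
have objE v : wnorm2 P (v - xh) + wnorm2 Q (r - A *m v)
    = lsq2 1%:M (invmx P) xh A (invmx Q) r v.
  by rewrite /lsq2 mul1mx -(bformNN _ (A *m v - r)) opprB.
have valE : lsq2 1%:M (invmx P) xh A (invmx Q) r vs = wnorm2 G (r - A *m xh).
  rewrite /lsq2 res1 res2 bformNN !bform_mulV ?hP.1 ?hQ.1 // -Gg wnorm2E.
  by rewrite bform_mulV ?hG.1 // /G bformDW -bform_congr trmxK.
have grad0 : (1%:M)^T *m invmx P *m (1%:M *m vs - xh)
    + A^T *m invmx Q *m (A *m vs - r) = 0.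
  rewrite res1 res2 trmx1 mul1mx (mulmxA (invmx P)) mulVmx // mul1mx.
  by rewrite mulmxN -mulmxA (mulmxA (invmx Q)) mulVmx // mul1mx subrr.
have sPi : (invmx P)^T = invmx P by rewrite trmx_inv hP.1.
have sQi : (invmx Q)^T = invmx Q by rewrite trmx_inv hQ.1.
clearbody vs; split; first by exists vs; rewrite objE valE.
move=> v _; rewrite objE -valE -(subrKC vs v) lsq2_critical //.
rewrite lerDl bformDW !bform_congr.
by rewrite addr_ge0 // spd_ge0 //; apply: spd_inv.
Qed.

Lemma wnorm2_fusion p a b (M1 : 'M[R]_(a, p)) (S1 : 'M[R]_a) c1
    (M2 : 'M[R]_(b, p)) (S2 : 'M[R]_b) c2 v :
  spd S1 -> spd S2 -> \rank (col_mx M1 M2) = p ->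
  let P := invmx (M1^T *m invmx S1 *m M1 + M2^T *m invmx S2 *m M2) in
  let xh := P *m M2^T *m invmx S2 *m c2 + P *m M1^T *m invmx S1 *m c1 in
  wnorm2 S1 (M1 *m v - c1) + wnorm2 S2 (c2 - M2 *m v)
  = wnorm2 P (v - xh) + (wnorm2 S1 (M1 *m xh - c1) + wnorm2 S2 (c2 - M2 *m xh)).
Proof.
move=> hS1 hS2 rkM P xh.
pose M := M1^T *m invmx S1 *m M1 + M2^T *m invmx S2 *m M2.
have uM : M \in unitmx := spd_unit (spd_info hS1 hS2 rkM).
have sW1 : (invmx S1)^T = invmx S1 by rewrite trmx_inv hS1.1.
have sW2 : (invmx S2)^T = invmx S2 by rewrite trmx_inv hS2.1.
have objE w : wnorm2 S1 (M1 *m w - c1) + wnorm2 S2 (c2 - M2 *m w)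
    = lsq2 M1 (invmx S1) c1 M2 (invmx S2) c2 w.
  by rewrite /lsq2 -(bformNN _ (M2 *m w - c2)) opprB.
have grad0 : M1^T *m invmx S1 *m (M1 *m xh - c1)
    + M2^T *m invmx S2 *m (M2 *m xh - c2) = 0.
  have MxhE : M *m xh = M2^T *m invmx S2 *m c2 + M1^T *m invmx S1 *m c1.
    by rewrite /xh /P !mulmxDr !mulmxA mulmxV // !mul1mx.
  rewrite !mulmxBr !mulmxA addrACA -mulmxDl -/M MxhE.
  by rewrite -opprD [X in - X]addrC subrr.
clearbody xh; rewrite !objE -[in LHS](subrKC xh v) lsq2_critical //.
by rewrite wnorm2E /P invmxK addrC.
Qed.

End QuadraticForms.

Section KalmanArrivalCost.
Variables (R : realFieldType) (n n1 m q : nat).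
Variables (E A : 'M[R]_(n1, n)) (B : 'M[R]_(n1, q)) (H : 'M[R]_(m, n)).
Variables (P0 : 'M[R]_n) (Q : 'M[R]_n1) (Rm : 'M[R]_m).
Variables (xbar0 : 'cV[R]_n) (u : nat -> 'cV[R]_q) (y : nat -> 'cV[R]_m).
Hypotheses (rkEH : \rank (col_mx E H) = n) (hP0 : spd P0) (hQ : spd Q) (hR : spd Rm).

Local Notation Pp := (Pplus E A B H P0 Q Rm xbar0 u y).
Local Notation Pm := (Pminus E A B H P0 Q Rm xbar0 u y).
Local Notation xh := (xhat E A B H P0 Q Rm xbar0 u y).
Local Notation J := (J_T E A B H P0 Q Rm xbar0 u y).
(* The posterior objective: J_k plus the measurement term of y_k. *)
Local Notation Jplus k := (Jhat_obj E A B H P0 Q Rm xbar0 u y k.+1).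

Definition zpred j := A *m xh j + B *m u j.

Definition prior_cost j c (v : 'cV[R]_n) := wnorm2 (Pm j) (E *m v - zpred j) + c.

Definition post_cost j c (v : 'cV[R]_n) := wnorm2 (Pp j) (v - xh j) + c.

Lemma Pplus_spd k : spd (Pp k).
Proof.
elim: k => [|k IH] //; rewrite /Pplus /=.
by apply/spd_inv/spd_info => //; exact: spd_congrD.
Qed.

Lemma Pminus_spd k : spd (Pm k).
Proof. exact: spd_congrD (Pplus_spd k) hQ. Qed.

Lemma Jplus_J k x : (0 < k)%N ->
  Jplus k x = J k x + wnorm2 Rm (y k - H *m x k).
Proof. by move=> k_gt0; rewrite /Jhat_obj big_nat_recr //= addrA. Qed.

Lemma J_Jplus k x : (0 < k)%N ->
  J k.+1 x = Jplus k x + wnorm2 Q (E *m x k.+1 - A *m x k - B *m u k).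
Proof.
by move=> k_gt0; rewrite /J_T /Jhat_obj !big_nat_recr //=; lra.
Qed.

Lemma Jplus_local k : (0 < k)%N -> depends_upto (Jplus k) k.
Proof.
move=> k_gt0 x x' xx'; rewrite /Jhat_obj !xx' //.
congr (_ + _ + _); apply: eq_big_nat => i /andP [i_gt0 ik].
  by rewrite !xx' // ltnW.
by rewrite xx'.
Qed.

Lemma arrival_prior1 : arrival_cost (J 1) 1 (prior_cost 0 0).
Proof.
have J1E x : J 1 x = prior_cost 0 0 (x 1%N).
  by rewrite /J_T !big_geq // !addr0 /prior_cost /zpred addr0 opprD addrA.
move=> v; split; first by exists (fun _ => v); rewrite J1E.
by move=> x <-; rewrite J1E.
Qed.

Lemma fusion_step j v :
  wnorm2 (Pm j) (E *m v - zpred j) + wnorm2 Rm (y j.+1 - H *m v)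
  = wnorm2 (Pp j.+1) (v - xh j.+1)
    + (wnorm2 (Pm j) (E *m xh j.+1 - zpred j) + wnorm2 Rm (y j.+1 - H *m xh j.+1)).
Proof. exact: wnorm2_fusion (Pminus_spd j) hR rkEH. Qed.

Lemma arrival_update j c :
  arrival_cost (J j.+1) j.+1 (prior_cost j c) ->
  exists c', arrival_cost (Jplus j.+1) j.+1 (post_cost j.+1 c').
Proof.
move=> hprior.
exists (c + (wnorm2 (Pm j) (E *m xh j.+1 - zpred j)
             + wnorm2 Rm (y j.+1 - H *m xh j.+1))).
apply: (arrival_cost_add (h := fun v => wnorm2 Rm (y j.+1 - H *m v)) hprior).
  by move=> x; exact: Jplus_J.
by move=> v; rewrite /prior_cost /post_cost; have := fusion_step j v; lra.
Qed.

Lemma arrival_predict j c : (0 < j)%N ->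
  arrival_cost (Jplus j) j (post_cost j c) ->
  arrival_cost (J j.+1) j.+1 (prior_cost j c).
Proof.
move=> j_gt0 hpost.
apply: (arrival_cost_marginal
  (W := fun w v => wnorm2 Q (E *m w - A *m v - B *m u j)) (Jplus_local j_gt0) hpost).
  by move=> x; exact: J_Jplus.
move=> w; apply: (is_min_of_addr (c := c)
  (wnorm2_marginal A (xh j) (E *m w - B *m u j) (Pplus_spd j) hQ)).
  by move=> v; rewrite /post_cost addrAC [_ - A *m v]addrAC.
by rewrite /prior_cost /zpred addrAC -addrA -opprD.
Qed.

Lemma arrival_prior j : exists c, arrival_cost (J j.+1) j.+1 (prior_cost j c).
Proof.
elim: j => [|j [c hprior]]; first by exists 0; exact: arrival_prior1.
have [c' hpost] := arrival_update hprior.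
by exists c'; exact: arrival_predict.
Qed.

Lemma post_cost_min k c :
  arrival_cost (Jplus k) k (post_cost k c) -> is_min_of (fun _ => True) (Jplus k) c.
Proof.
move=> hpost; apply: (arrival_cost_min (v0 := xh k) hpost).
  by rewrite /post_cost subrr wnorm2E bform0r add0r.
by move=> v; rewrite /post_cost lerDr; exact: spd_ge0 (spd_inv (Pplus_spd k)).
Qed.

End KalmanArrivalCost.

Theorem theorem1 (R : realFieldType) (n n1 m q : nat)
  (E A : 'M[R]_(n1, n)) (B : 'M[R]_(n1, q)) (H : 'M[R]_(m, n))
  (P0 : 'M[R]_n) (Q : 'M[R]_n1) (Rm : 'M[R]_m)
  (xbar0 : 'cV[R]_n) (u : nat -> 'cV[R]_q) (y : nat -> 'cV[R]_m) (T : nat) :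
  \rank (row_mx E A) = n1 ->
  \rank (col_mx E H) = n ->
  spd P0 -> spd Q -> spd Rm ->
  (2 <= T)%N ->
  exists Jhat : R,
    is_min_of (fun _ => True)
      (Jhat_obj E A B H P0 Q Rm xbar0 u y T) Jhat /\
    forall xT : 'cV[R]_n,
      is_min_of (fun x : nat -> 'cV[R]_n => x T = xT)
        (J_T E A B H P0 Q Rm xbar0 u y T)
        (wnorm2 (Pminus E A B H P0 Q Rm xbar0 u y T.-1)
           (E *m xT - (A *m xhat E A B H P0 Q Rm xbar0 u y T.-1 + B *m u T.-1))
         + Jhat).
Proof.
move=> _ rkEH hP0 hQ hR; case: T => [|[|j]] // _.
have [c hprior] := arrival_prior A B xbar0 u y rkEH hP0 hQ hR j.
have [Jhat hpost] := arrival_update rkEH hP0 hQ hR hprior.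
exists Jhat; split; first exact: post_cost_min hpost.
exact: (arrival_predict rkEH hP0 hQ hR (ltn0Sn j) hpost).
Qed.
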